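(* Let $\mathfrak{A}$ be a class of transitive dynamical systems. Suppose that $\mathfrak{A}$ contains at least one system $(X,f)$ having a point $x\in X$ with dense orbit $\{f^n(x):n\ge 0\}$ such that the points $f^i(x)$, $i\in\mathbb{N}$, are pairwise distinct (a non-periodic system), and suppose there exists some strongly mixing dynamical system which is not in $\mathfrak{A}$. Then there is no Furstenberg family $\mathcal{F}$ such that for every dynamical system $(Y,g)$: $(Y,g)\in\mathfrak{A}$ if and only if $(Y,g)$ is $\mathcal{F}$-transitive.
   Context: A dynamical system is a pair $(X,f)$ with $X$ a compact metric space and $f:X\to X$ continuous. $\mathbb{N}=\{1,2,\dots\}$. For subsets $U,V\subset X$, $N(U,V)=\{n\in\mathbb{N}: U\cap f^{-n}(V)\neq\emptyset\}$. $(X,f)$ is transitive if $N(U,V)\ne\emptyset$ for all non-empty open $U,V\subset X$, and strongly mixing if $N(U,V)$ is cofinite for all non-empty open $U,V$. A Furstenberg family is a collection $\mathcal{F}$ of subsets of $\mathbb{N}$ such that $F_1\subset F_2$ and $F_1\in\mathcal{F}$ imply $F_2\in\mathcal{F}$. $(X,f)$ is $\mathcal{F}$-transitive if $N(U,V)\in\mathcal{F}$ for all non-empty open $U,V\subset X$. *)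

From Stdlib Require Import Reals List.
Open Scope R_scope.

Record CompactMetric := {
  cm_carrier :> Type;
  cm_dist : cm_carrier -> cm_carrier -> R;
  cm_dist_nonneg : forall x y, 0 <= cm_dist x y;
  cm_dist_eq0 : forall x y, cm_dist x y = 0 <-> x = y;
  cm_dist_sym : forall x y, cm_dist x y = cm_dist y x;
  cm_dist_tri : forall x y z, cm_dist x z <= cm_dist x y + cm_dist y z;
  cm_compact : forall (I : Type) (U : I -> cm_carrier -> Prop),
      (forall i x, U i x -> exists eps, 0 < eps /\
          forall y, cm_dist x y < eps -> U i y) ->
      (forall x, exists i, U i x) ->
      exists l : list I, forall x, exists i, In i l /\ U i x
}.

Definition is_open {X : CompactMetric} (U : X -> Prop) : Prop :=
  forall x, U x -> exists eps, 0 < eps /\ forall y, cm_dist X x y < eps -> U y.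

Definition nonempty {X : Type} (U : X -> Prop) : Prop := exists x, U x.

Definition continuous {X : CompactMetric} (f : X -> X) : Prop :=
  forall x eps, 0 < eps -> exists delta, 0 < delta /\
    forall y, cm_dist X x y < delta -> cm_dist X (f x) (f y) < eps.

Record DynSys := {
  ds_space : CompactMetric;
  ds_map : ds_space -> ds_space;
  ds_cont : continuous ds_map
}.

Definition iterate (S : DynSys) (n : nat) (x : ds_space S) : ds_space S :=
  Nat.iter n (ds_map S) x.

(** Subsets of N = {1,2,...} are encoded as predicates on nat; N(U,V) never
    contains 0. *)
Definition hitting (S : DynSys) (U V : ds_space S -> Prop) : nat -> Prop :=
  fun n => (1 <= n)%nat /\ exists x, U x /\ V (iterate S n x).

Definition transitive (S : DynSys) : Prop :=
  forall U V : ds_space S -> Prop, is_open U -> is_open V ->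
    nonempty U -> nonempty V -> exists n, hitting S U V n.

Definition strongly_mixing (S : DynSys) : Prop :=
  forall U V : ds_space S -> Prop, is_open U -> is_open V ->
    nonempty U -> nonempty V ->
    exists m, forall n, (m <= n)%nat -> (1 <= n)%nat -> hitting S U V n.

Definition furstenberg_family (F : (nat -> Prop) -> Prop) : Prop :=
  forall A B : nat -> Prop, (forall n, A n -> B n) -> F A -> F B.

Definition F_transitive (F : (nat -> Prop) -> Prop) (S : DynSys) : Prop :=
  forall U V : ds_space S -> Prop, is_open U -> is_open V ->
    nonempty U -> nonempty V -> F (hitting S U V).

Definition dense_orbit (S : DynSys) (x : ds_space S) : Prop :=
  forall U : ds_space S -> Prop, is_open U -> nonempty U ->
    exists n, U (iterate S n x).

Definition non_periodic_point (S : DynSys) (x : ds_space S) : Prop :=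
  forall i j, (1 <= i)%nat -> (1 <= j)%nat -> i <> j ->
    iterate S i x <> iterate S j x.

From Stdlib Require Import Reals List Lra Lia.
Open Scope R_scope.

(* Let (X,f) be a system of the class with a non-periodic point x,
   and put p := f(x); then f^n(p) <> p for every n >= 1.  By continuity of the
   finitely many iterates f^1, ..., f^(m-1), a small enough ball B around p is
   moved off itself by each of them, so the return-time set N(B,B) only contains
   integers >= m.  In a strongly mixing system every N(U,V) contains all integers
   >= m for some m.  Hence if F is a Furstenberg family for which (X,f) is
   F-transitive, then F contains N(B,B) for every such ball, and by upward
   closure F contains every N(U,V) of a strongly mixing system: every strongly
   mixing system is F-transitive.  So a class containing (X,f) and missing some
   strongly mixing system cannot be the class of F-transitive systems. *)

Definition ball (X : CompactMetric) (c : X) (r : R) : X -> Prop :=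
  fun y => cm_dist X c y < r.

Lemma ball_open (X : CompactMetric) (c : X) (r : R) : is_open (ball X c r).
Proof.
  intros z Hz; unfold ball in Hz.
  exists (r - cm_dist X c z); split; [lra|].
  intros y Hy; unfold ball.
  pose proof (cm_dist_tri X c z y); lra.
Qed.

Lemma ball_center (X : CompactMetric) (c : X) (r : R) : 0 < r -> ball X c r c.
Proof.
  intros Hr; unfold ball.
  replace (cm_dist X c c) with 0; [exact Hr|].
  symmetry; apply cm_dist_eq0; reflexivity.
Qed.

Lemma dist_pos_of_neq (X : CompactMetric) (x y : X) : x <> y -> 0 < cm_dist X x y.
Proof.
  intros Hxy.
  destruct (Rle_lt_or_eq_dec _ _ (cm_dist_nonneg X x y)) as [Hpos|Hzero]; [exact Hpos|].
  exfalso; apply Hxy, cm_dist_eq0; symmetry; exact Hzero.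
Qed.

Lemma iterate_continuous (S : DynSys) (n : nat) : continuous (iterate S n).
Proof.
  induction n as [|n IH]; intros x eps Heps.
  - exists eps; split; [exact Heps|]; intros y Hy; exact Hy.
  - destruct (ds_cont S (iterate S n x) eps Heps) as [d1 [Hd1 Hf]].
    destruct (IH x d1 Hd1) as [d2 [Hd2 Hfn]].
    exists d2; split; [exact Hd2|].
    intros y Hy; apply Hf, Hfn, Hy.
Qed.

Lemma iterate_add (S : DynSys) (m n : nat) (x : ds_space S) :
  iterate S (m + n) x = iterate S m (iterate S n x).
Proof. unfold iterate; apply Nat.iter_add. Qed.

Lemma non_periodic_image (S : DynSys) (x : ds_space S) :
  non_periodic_point S x ->
  forall n, (1 <= n)%nat -> iterate S n (iterate S 1 x) <> iterate S 1 x.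
Proof.
  intros Hnp n Hn Hret.
  apply (Hnp (n + 1)%nat 1%nat); [lia | lia | lia |].
  rewrite iterate_add; exact Hret.
Qed.

Section Separation.

Variable S : DynSys.
Variable p : ds_space S.

Lemma separate_one_iterate (n : nat) :
  iterate S n p <> p ->
  exists d, 0 < d /\ forall z, cm_dist _ p z < d -> d <= cm_dist _ p (iterate S n z).
Proof.
  intros Hmove.
  set (c := cm_dist _ p (iterate S n p)).
  assert (Hc : 0 < c) by (apply dist_pos_of_neq; intros E; apply Hmove; symmetry; exact E).
  destruct (iterate_continuous S n p (c / 2)) as [d [Hd Hcont]]; [lra|].
  exists (Rmin d (c / 2)); split; [apply Rmin_pos; lra|].
  intros z Hz.
  pose proof (Rmin_l d (c / 2)); pose proof (Rmin_r d (c / 2)).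
  pose proof (Hcont z ltac:(lra)) as Hclose.
  pose proof (cm_dist_tri _ p (iterate S n z) (iterate S n p)) as Htri.
  rewrite (cm_dist_sym _ (iterate S n z)) in Htri; fold c in Htri.
  lra.
Qed.

Hypothesis p_not_periodic : forall n, (1 <= n)%nat -> iterate S n p <> p.

Lemma separate_first_iterates (m : nat) :
  exists d, 0 < d /\ forall z, cm_dist _ p z < d ->
    forall n, (1 <= n)%nat -> (n < m)%nat -> d <= cm_dist _ p (iterate S n z).
Proof.
  induction m as [|m [d1 [Hd1 Hsep1]]].
  - exists 1; split; [lra|]; intros; lia.
  - destruct (Nat.eq_dec m 0) as [->|Hm].
    { exists d1; split; [exact Hd1|]; intros; lia. }
    destruct (separate_one_iterate m (p_not_periodic m ltac:(lia))) as [d2 [Hd2 Hsep2]].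
    exists (Rmin d1 d2); split; [apply Rmin_pos; assumption|].
    intros z Hz n Hn1 Hnm.
    pose proof (Rmin_l d1 d2); pose proof (Rmin_r d1 d2).
    destruct (Nat.eq_dec n m) as [->|Hne].
    + pose proof (Hsep2 z ltac:(lra)); lra.
    + pose proof (Hsep1 z ltac:(lra) n Hn1 ltac:(lia)); lra.
Qed.

Lemma late_returns (m : nat) :
  exists d, 0 < d /\
    forall n, hitting S (ball _ p d) (ball _ p d) n -> (m <= n)%nat.
Proof.
  destruct (separate_first_iterates m) as [d [Hd Hsep]].
  exists d; split; [exact Hd|].
  intros n [Hn [z [Hz Hret]]].
  destruct (Nat.lt_ge_cases n m) as [Hlt|Hge]; [|exact Hge].
  pose proof (Hsep z Hz n Hn Hlt); unfold ball in Hret; lra.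
Qed.

End Separation.

Lemma strongly_mixing_F_transitive (F : (nat -> Prop) -> Prop) (S T : DynSys)
  (p : ds_space S) :
  furstenberg_family F -> F_transitive F S ->
  (forall n, (1 <= n)%nat -> iterate S n p <> p) ->
  strongly_mixing T -> F_transitive F T.
Proof.
  intros HF HS Hp HT U V HU HV HUne HVne.
  destruct (HT U V HU HV HUne HVne) as [m Hmix].
  destruct (late_returns S p Hp m) as [d [Hd Hlate]].
  assert (HB : nonempty (ball _ p d)) by (exists p; apply ball_center, Hd).
  apply (HF (hitting S (ball _ p d) (ball _ p d))).
  - intros n Hn; apply Hmix; [apply Hlate, Hn | apply (proj1 Hn)].
  - apply HS; [apply ball_open | apply ball_open | exact HB | exact HB].
Qed.

Theorem proposition3p1 (A : DynSys -> Prop)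
  (HAtrans : forall S, A S -> transitive S)
  (HAnp : exists S, A S /\ exists x, dense_orbit S x /\ non_periodic_point S x)
  (Hmix : exists S, strongly_mixing S /\ ~ A S) :
  ~ exists F : (nat -> Prop) -> Prop, furstenberg_family F /\
      forall S, A S <-> F_transitive F S.
Proof.
  intros [F [HF HA]].
  destruct HAnp as [S [HS [x [_ Hnp]]]].
  destruct Hmix as [T [HT HnotT]].
  apply HnotT, HA.
  apply (strongly_mixing_F_transitive F S T (iterate S 1 x)).
  - exact HF.
  - apply HA, HS.
  - apply non_periodic_image, Hnp.
  - exact HT.
Qed.
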